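(* Let $G$ be a finite simple connected graph other than $K_2$ and let $U$ be a subset of the leaves of $G$. Then $\rho\circ\lambda_U(G)$ and $G$ have the same reduction.
   Context: A leaf is a vertex of degree one; two distinct vertices are siblings if they have the same closed neighborhood $N[v]=\{v\}\cup N(v)$. For a graph $G\neq K_2$ and a set $S$ of its leaves, $\lambda_S(G)$ removes the vertices of $S$; $\lambda(G)$ removes all leaves. $\rho(G)$ contracts each maximal group of siblings to a single vertex. The reduction of a connected graph $G\neq K_2$ is $(\rho\circ\lambda)^n(G)$ for $n$ large enough that this graph has neither leaves nor siblings (equivalently, obtained by repeatedly removing all leaves and contracting groups of siblings). Graphs are compared up to isomorphism. *)

From mathcomp Require Import all_boot.
Set Implicit Arguments. Unset Strict Implicit. Unset Printing Implicit Defensive.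

(* All graphs produced by the operations
   lambda and rho are induced subgraphs of (T, e); they are represented by
   their vertex set A : {set T}. *)

Section Graphs.
Variables (T : finType) (e : rel T).

Definition simple_graph := symmetric e /\ irreflexive e.

Definition nbr (A : {set T}) (v : T) : {set T} := [set u in A | e v u].
Definition cnbr (A : {set T}) (v : T) : {set T} := v |: nbr A v.

Definition leaf (A : {set T}) (v : T) : bool := (v \in A) && (#|nbr A v| == 1).
Definition leaves (A : {set T}) : {set T} := [set v | leaf A v].

Definition siblings (A : {set T}) (u v : T) : bool :=
  [&& u \in A, v \in A, u != v & cnbr A u == cnbr A v].

Definition lambdaS (A S : {set T}) : {set T} := A :\: S.
Definition lambda (A : {set T}) : {set T} := lambdaS A (leaves A).

(* rho : contract each maximal group of siblings to a single vertex; since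
   siblings have the same closed neighbourhood, this amounts to keeping one
   representative (the one of least rank in enum T) of each group. *)
Definition rho (A : {set T}) : {set T} :=
  [set v in A | ~~ [exists u, siblings A u v && (enum_rank u < enum_rank v)]].

Definition reduced (A : {set T}) : bool :=
  [forall v, ~~ leaf A v] && [forall u, forall v, ~~ siblings A u v].

Definition is_reduction (A R : {set T}) : Prop :=
  exists n, R = iter n (fun X => rho (lambda X)) A /\ reduced R.

Definition iso_on (A B : {set T}) : Prop :=
  exists f : T -> T, [/\ {in A &, injective f}, f @: A = B &
                        {in A &, forall u v, e (f u) (f v) = e u v}].

Definition connected_graph : Prop := forall u v : T, connect e u v.

Definition is_K2 : Prop := #|T| = 2 /\ forall u v : T, u != v -> e u v.

End Graphs.

From mathcomp Require Import all_boot.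
Set Implicit Arguments. Unset Strict Implicit. Unset Printing Implicit Defensive.

(* Call u and v twins in A when they have the same closed neighbourhood in A:
   siblings are distinct twins, and rho A keeps one vertex of each twin class.
   Any two sets of representatives of the twin classes induce isomorphic
   graphs; more generally rho C and rho D are isomorphic as soon as C is a
   subset of D and every vertex of D has a twin (in D) inside C.  Since lambda
   and rho commute with isomorphisms, the reduction is invariant under
   isomorphism and under one step rho o lambda.

   Induct on |A|, for A without two adjacent leaves and S a set of leaves of A,
   and put B = rho (A - S).  Let P be the leaves of A outside S whose neighbour
   is still not a leaf of A - S.  The remaining leaves outside S are twins of
   their neighbour in A - S - P, and the vertices of P have no twins in A - S,
   so rho (lambda A) ~ rho (A - S - P) ~ rho (B - P), and P is a set of leaves
   of B.  As |B| < |A| and rho never creates two adjacent leaves, induction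
   shows that B and rho (B - P) have the same reduction, hence so do A and B.
   A connected graph other than K_2 has no two adjacent leaves. *)

Section Reduction.
Variables (T : finType) (e : rel T).
Hypotheses (esym : symmetric e) (eirr : irreflexive e).
Implicit Types (A B C D S X : {set T}) (u v w x y z : T).

Lemma in_nbr A v u : (u \in nbr e A v) = (u \in A) && e v u.
Proof. by rewrite inE. Qed.

Lemma in_cnbr A v u : (u \in cnbr e A v) = (u == v) || (u \in A) && e v u.
Proof. by rewrite !inE. Qed.

Lemma cnbr_id A v : v \in cnbr e A v.
Proof. by rewrite in_cnbr eqxx. Qed.

Lemma cnbr_sub A v : v \in A -> cnbr e A v \subset A.
Proof. by move=> vA; apply/subsetP=> u; rewrite in_cnbr => /orP[/eqP->|/andP[]]. Qed.

Lemma cnbr_sym A x y : x \in A -> y \in A -> (x \in cnbr e A y) = (y \in cnbr e A x).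
Proof. by move=> xA yA; rewrite !in_cnbr xA yA eq_sym esym. Qed.

Lemma adj_cnbr A x y : y \in A -> x != y -> e x y = (y \in cnbr e A x).
Proof. by move=> yA xy; rewrite in_cnbr yA eq_sym (negbTE xy). Qed.

Lemma nbr_cnbr A v : nbr e A v = cnbr e A v :\ v.
Proof.
apply/setP=> u; rewrite !inE; case: (u =P v) => [->|//].
by rewrite eirr andbF.
Qed.

Lemma nbr_subset C D x : C \subset D -> nbr e C x = nbr e D x :&: C.
Proof.
move=> CD; apply/setP=> z; rewrite in_setI !in_nbr.
case zC: (z \in C); last by rewrite andbF.
by rewrite (subsetP CD z zC) andbT.
Qed.

Lemma cnbr_subset C D x : C \subset D -> x \in C -> cnbr e C x = cnbr e D x :&: C.
Proof.
move=> CD xC; apply/setP=> z; rewrite in_setI !in_cnbr.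
case: (z =P x) => [->|_] /=; first by rewrite xC.
case zC: (z \in C); last by rewrite andbF.
by rewrite (subsetP CD z zC) andbT.
Qed.

Lemma cnbr_setD B S u : u \notin S -> cnbr e (B :\: S) u = cnbr e B u :\: S.
Proof.
move=> uS; apply/setP=> z; rewrite !inE.
case: (z =P u) => [->|_] /=; first by rewrite uS.
by rewrite andbA.
Qed.

Lemma leaf_nbr A v w : leaf e A v -> w \in nbr e A v -> nbr e A v = [set w].
Proof. by case/andP=> _ /cards1P[t ->]; rewrite inE => /eqP->. Qed.

Definition twin A u v := [&& u \in A, v \in A & cnbr e A u == cnbr e A v].

Lemma siblingsE A u v : siblings e A u v = twin A u v && (u != v).
Proof.
rewrite /siblings /twin.
by case: (u \in A); case: (v \in A); case: (u != v); rewrite /= ?andbF ?andbT.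
Qed.

Lemma twin_refl A u : u \in A -> twin A u u.
Proof. by move=> uA; rewrite /twin uA eqxx. Qed.

Lemma twin_sym A u v : twin A u v -> twin A v u.
Proof. by case/and3P=> uA vA /eqP E; rewrite /twin uA vA E eqxx. Qed.

Lemma twin_trans A u v w : twin A u v -> twin A v w -> twin A u w.
Proof. by case/and3P=> uA _ /eqP E; case/and3P=> _ wA /eqP E'; rewrite /twin uA wA E E' eqxx. Qed.

Lemma twin_cnbr A u v : twin A u v -> cnbr e A u = cnbr e A v.
Proof. by case/and3P=> _ _ /eqP. Qed.

Lemma twin_in A u v : twin A u v -> (u \in A) /\ (v \in A).
Proof. by case/and3P. Qed.

Lemma twin_adj A a b a' b' : twin A a a' -> twin A b b' -> ~~ twin A a b -> e a b = e a' b'.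
Proof.
move=> taa tbb nab.
have [aA a'A] := twin_in taa; have [bA b'A] := twin_in tbb.
have ab : a != b by apply: contra nab => /eqP <-; apply: twin_refl.
have a'b : a' != b by apply: contra nab => /eqP E; rewrite -E.
have b'a' : b' != a'.
  apply: contra nab => /eqP E; apply: (twin_trans taa); rewrite -E; exact: twin_sym.
rewrite (adj_cnbr bA ab) (twin_cnbr taa) -(adj_cnbr bA a'b) esym.
rewrite (adj_cnbr a'A); last by rewrite eq_sym.
by rewrite (twin_cnbr tbb) -(adj_cnbr a'A b'a') esym.
Qed.

Lemma twin_subset C D x y : C \subset D -> x \in C -> y \in C -> twin D x y -> twin C x y.
Proof. by move=> CD xC yC t; rewrite /twin xC yC !(cnbr_subset CD) // (twin_cnbr t) eqxx. Qed.

Lemma twin_setD B S x y : x \notin S -> y \notin S -> twin B x y -> twin (B :\: S) x y.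
Proof.
move=> xS yS t; have [xB yB] := twin_in t.
by rewrite /twin !inE xS yS xB yB !cnbr_setD // (twin_cnbr t) eqxx.
Qed.

Lemma rho_sub A : rho e A \subset A.
Proof. by apply/subsetP=> v; rewrite inE => /andP[]. Qed.

Lemma enum_rank_neq u v : u != v -> (enum_rank u < enum_rank v) || (enum_rank v < enum_rank u).
Proof.
move=> uv; rewrite -neq_ltn; apply: contra uv => /eqP E.
by apply/eqP/enum_rank_inj/val_inj.
Qed.

Lemma rho_twin_rep A x : x \in A -> exists2 y, y \in rho e A & twin A x y.
Proof.
move=> xA.
have [y txy ymin] := arg_minnP (fun y => enum_rank y) (twin_refl xA).
exists y => //.
have [_ yA] := twin_in txy.
rewrite inE yA /=; apply/existsP=> [[u /andP[]]].
rewrite siblingsE => /andP[tuy _].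
by rewrite ltnNge ymin // (twin_trans txy (twin_sym tuy)).
Qed.

Lemma rho_twin_uniq A : {in rho e A &, forall y y', twin A y y' -> y = y'}.
Proof.
move=> y y' yR y'R t; apply/eqP/negPn/negP=> yy'.
case/orP: (enum_rank_neq yy') => lt.
  move: y'R; rewrite inE => /andP[_ /existsP]; apply; exists y.
  by rewrite siblingsE t yy' lt.
move: yR; rewrite inE => /andP[_ /existsP]; apply; exists y'.
by rewrite siblingsE twin_sym // eq_sym yy' lt.
Qed.

Definition twin_transversal A C := [/\ C \subset A,
  forall x, x \in A -> exists2 c, c \in C & twin A x c &
  {in C &, forall c c', twin A c c' -> c = c'}].

Lemma rho_transversal A : twin_transversal A (rho e A).
Proof. by split; [exact: rho_sub | move=> x; exact: rho_twin_rep | exact: rho_twin_uniq]. Qed.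

Definition graph_iso (f : T -> T) A B :=
  [/\ {in A &, injective f}, f @: A = B & {in A &, forall u v, e (f u) (f v) = e u v}].

Lemma iso_on_refl A : iso_on e A A.
Proof. by exists id; split=> //; rewrite imset_id. Qed.

Lemma iso_on_trans A B C : iso_on e A B -> iso_on e B C -> iso_on e A C.
Proof.
case=> f [fi fA fe] [g [gi gB ge]].
have fB x : x \in A -> f x \in B by move=> xA; rewrite -fA imset_f.
exists (g \o f); split.
- by move=> x y xA yA /= /gi E; apply: fi => //; apply: E; apply: fB.
- by rewrite imset_comp fA.
- by move=> u v uA vA /=; rewrite ge ?fe ?fB.
Qed.

Lemma iso_on_sym A B : iso_on e A B -> iso_on e B A.
Proof.
case=> f [fi fA fe].
pose g y := odflt y [pick x in A | f x == y].
have gP y : y \in B -> (g y \in A) /\ f (g y) = y.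
  move=> yB; rewrite /g; case: pickP => [x /andP[xA /eqP E] | none] //=.
  move: yB; rewrite -fA => /imsetP[x xA E]; have := none x; by rewrite xA E eqxx.
exists g; split.
- by move=> x y xB yB E; have [_ <-] := gP x xB; have [_ <-] := gP y yB; rewrite E.
- apply/setP=> x; apply/imsetP/idP => [[y yB ->]|xA]; first by have [] := gP y yB.
  have fxB : f x \in B by rewrite -fA imset_f.
  by exists (f x) => //; have [gA E] := gP _ fxB; apply: fi.
- move=> u v uB vB; have [uA Eu] := gP u uB; have [vA Ev] := gP v vB.
  by rewrite -fe // Eu Ev.
Qed.

(* Pairing each representative in C with its twin in D is an isomorphism
   because adjacency between distinct twin classes does not depend on the
   chosen representatives (twin_adj). *)
Lemma transversal_iso A C D :
  twin_transversal A C -> twin_transversal A D -> iso_on e C D.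
Proof.
case=> CA Crep Cu [DA Drep Du].
pose phi c := odflt c [pick d in D | twin A c d].
have phiP c : c \in A -> (phi c \in D) /\ twin A c (phi c).
  move=> cA; rewrite /phi; case: pickP => [d /andP[dD t] | none] //=.
  have [d dD t] := Drep c cA; have := none d; by rewrite dD t.
have phiP' c : c \in C -> (phi c \in D) /\ twin A c (phi c).
  by move=> cC; apply/phiP/(subsetP CA).
exists phi; split.
- move=> c c' cC c'C E.
  have [_ t] := phiP' c cC; have [_ t'] := phiP' c' c'C.
  by apply: Cu => //; apply: (twin_trans t); rewrite E; apply: twin_sym.
- apply/setP=> d; apply/imsetP/idP => [[c cC ->]|dD]; first by have [] := phiP' c cC.
  have [c cC t] := Crep d (subsetP DA d dD); exists c => //.
  have [pD t'] := phiP' c cC.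
  by apply: Du => //; apply: twin_trans t t'.
- move=> u v uC vC.
  have [_ tu] := phiP' u uC; have [_ tv] := phiP' v vC.
  case: (u =P v) => [<-|uv]; first by rewrite !eirr.
  by symmetry; apply: (twin_adj tu tv); apply/negP => /(Cu u v uC vC).
Qed.

Definition twin_cover C D :=
  C \subset D /\ forall z, z \in D -> exists2 z', z' \in C & twin D z z'.

Lemma rho_twin_cover A : twin_cover (rho e A) A.
Proof. by split; [exact: rho_sub | move=> z; exact: rho_twin_rep]. Qed.

(* A vertex z of D outside C sees a of C iff its twin z' in C does, and z'
   is seen by b whenever it is seen by a. *)
Lemma twin_cover_twin C D x y :
  twin_cover C D -> x \in C -> y \in C -> twin C x y -> twin D x y.
Proof.
move=> [CD cover] xC yC t.
suff sub a b : a \in C -> b \in C -> cnbr e D a :&: C = cnbr e D b :&: C ->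
    cnbr e D a \subset cnbr e D b.
  have E : cnbr e D x :&: C = cnbr e D y :&: C by rewrite -!(cnbr_subset CD) // (twin_cnbr t).
  by rewrite /twin !(subsetP CD) //= eqEsubset !sub.
move=> aC bC Eab; apply/subsetP => z za.
have [aD bD] := (subsetP CD a aC, subsetP CD b bC).
have inCb c : c \in C -> c \in cnbr e D a -> c \in cnbr e D b.
  move=> cC ca; have : c \in cnbr e D a :&: C by rewrite inE ca cC.
  by rewrite Eab => /setIP[].
have zD : z \in D := subsetP (cnbr_sub aD) z za.
case zC: (z \in C); first exact: inCb za.
have [z' z'C tzz'] := cover z zD.
have z'D := subsetP CD z' z'C.
have z'a : z' \in cnbr e D a by rewrite cnbr_sym // -(twin_cnbr tzz') cnbr_sym.
by rewrite cnbr_sym // (twin_cnbr tzz') cnbr_sym // inCb.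
Qed.

Lemma twin_cover_transversal C D : twin_cover C D -> twin_transversal D (rho e C).
Proof.
move=> cov; have [CD cover] := cov; split.
- exact: subset_trans (rho_sub C) CD.
- move=> x xD; have [z' z'C t] := cover x xD.
  have [c cR t'] := rho_twin_rep z'C.
  exists c => //; apply: (twin_trans t); apply: twin_cover_twin cov _ _ t' => //.
  exact: subsetP (rho_sub C) c cR.
- move=> c c' cR c'R t; apply: (rho_twin_uniq cR c'R).
  by apply: twin_subset CD _ _ t; apply: (subsetP (rho_sub C)).
Qed.

Lemma twin_cover_iso C D : twin_cover C D -> iso_on e (rho e C) (rho e D).
Proof. by move=> cov; apply: transversal_iso (twin_cover_transversal cov) (rho_transversal D). Qed.

Lemma graph_iso_restr f A A' B : graph_iso f A A' -> B \subset A -> graph_iso f B (f @: B).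
Proof.
case=> fi _ fe BA; split=> // x y xB yB; [apply: fi | apply: fe]; exact: subsetP BA _ _.
Qed.

Section GraphIso.
Variables (f : T -> T) (A A' : {set T}).
Hypothesis fiso : graph_iso f A A'.

Lemma graph_iso_mem x : x \in A -> f x \in A'.
Proof. by case: fiso => _ <- _ xA; rewrite imset_f. Qed.

Lemma graph_iso_nbr v : v \in A -> nbr e A' (f v) = f @: nbr e A v.
Proof.
case: fiso => fi fA fe vA; apply/setP=> y; rewrite in_nbr.
apply/andP/imsetP => [[yA' evy]|[x xn ->]].
  move: yA'; rewrite -fA => /imsetP[x xA E]; exists x => //.
  by rewrite in_nbr xA -fe // -E.
by move: xn; rewrite in_nbr => /andP[xA evx]; rewrite graph_iso_mem // fe.
Qed.

Lemma graph_iso_leaf v : v \in A -> leaf e A' (f v) = leaf e A v.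
Proof.
case: fiso => fi _ _ vA.
rewrite /leaf vA graph_iso_mem // graph_iso_nbr // card_in_imset //.
by move=> x y; rewrite !in_nbr => /andP[xA _] /andP[yA _]; apply: fi.
Qed.

Lemma graph_iso_lambda : graph_iso f (lambda e A) (lambda e A').
Proof.
have [fi fl fe] := graph_iso_restr fiso (subsetDl A (leaves e A)); split => //.
case: fiso => _ fA _; apply/setP=> y; rewrite /lambda /lambdaS.
apply/imsetP/idP => [[x]|].
  by rewrite !inE => /andP[nl xA] ->; rewrite graph_iso_mem // graph_iso_leaf // nl.
rewrite !inE => /andP[nl]; rewrite -fA => /imsetP[x xA E]; exists x => //.
by rewrite !inE xA -(graph_iso_leaf xA) -E nl.
Qed.

Lemma graph_iso_cnbr u x : u \in A -> x \in A ->
  (f x \in cnbr e A' (f u)) = (x \in cnbr e A u).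
Proof.
case: fiso => fi _ fe uA xA.
by rewrite !in_cnbr (inj_in_eq fi) // graph_iso_mem // xA fe.
Qed.

Lemma graph_iso_twin u v : u \in A -> v \in A -> twin A' (f u) (f v) = twin A u v.
Proof.
case: fiso => _ fA _ uA vA; rewrite /twin !graph_iso_mem // uA vA /=.
have out B' a x : a \in B' -> x \notin B' -> (x \in cnbr e B' a) = false.
  by move=> aB xB; apply: contraNF xB; apply: (subsetP (cnbr_sub aB)).
apply/eqP/eqP => E; apply/setP => x.
  case xA: (x \in A); last by rewrite !out ?xA.
  by rewrite -!(graph_iso_cnbr _ xA) // E.
case xA': (x \in A'); last by rewrite !out ?xA' ?graph_iso_mem.
by move: xA'; rewrite -{1}fA => /imsetP[y yA ->]; rewrite !graph_iso_cnbr // E.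
Qed.

Lemma graph_iso_rho : iso_on e (rho e A) (rho e A').
Proof.
have sub := rho_sub A.
apply: (@iso_on_trans _ (f @: rho e A)); first by exists f; apply: graph_iso_restr fiso sub.
apply: (@transversal_iso A'); last exact: rho_transversal.
have [_ fA _] := fiso; split.
- by rewrite -fA; apply: imsetS.
- move=> x; rewrite -{1}fA => /imsetP[a aA ->].
  have [y yR t] := rho_twin_rep aA.
  by exists (f y); rewrite ?imset_f // graph_iso_twin // (subsetP sub).
- move=> c c' /imsetP[a aR ->] /imsetP[b bR ->].
  by rewrite graph_iso_twin ?(subsetP sub) // => t; rewrite (rho_twin_uniq aR bR t).
Qed.

End GraphIso.

Definition red_step X := rho e (lambda e X).

Lemma iso_on_iter_red_step n A A' :
  iso_on e A A' -> iso_on e (iter n red_step A) (iter n red_step A').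
Proof.
by move=> iso; elim: n => //= n [f fiso]; apply: graph_iso_rho (graph_iso_lambda fiso).
Qed.

Lemma red_step_sub A : red_step A \subset A.
Proof. exact: subset_trans (rho_sub _) (subsetDl _ _). Qed.

Lemma reducedE A : reduced e A <-> red_step A = A.
Proof.
split.
  case/andP=> /forallP nl /forallP ns.
  rewrite /red_step; have -> : lambda e A = A.
    by apply/setP=> v; rewrite !inE (negbTE (nl v)).
  apply/setP=> v; rewrite inE; case vA: (v \in A) => //=.
  by apply/negP => /existsP[u /andP[s _]]; have := forallP (ns u) v; rewrite s.
move=> E.
have LA : lambda e A = A.
  by apply/eqP; rewrite eqEsubset subsetDl -{1}E rho_sub.
have RA : rho e A = A by rewrite -{2}E /red_step LA.
apply/andP; split; apply/forallP => v.
  apply/negP => lv; have vA : v \in A by case/andP: lv.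
  by move: vA; rewrite -{1}LA !inE lv.
apply/forallP => w; apply/negP; rewrite siblingsE => /andP[t vw].
have [vA wA] := twin_in t.
by move: vw; rewrite (rho_twin_uniq _ _ t) ?RA ?eqxx.
Qed.

Lemma is_reductionP A R :
  is_reduction e A R <-> exists n, R = iter n red_step A /\ red_step R = R.
Proof. by split; case=> n [-> /reducedE h]; exists n. Qed.

Lemma iter_red_step_fixed n A : red_step A = A -> iter n red_step A = A.
Proof. by move=> h; elim: n => //= n ->. Qed.

Lemma iter_red_step_stable n m A : n <= m ->
  red_step (iter n red_step A) = iter n red_step A -> iter m red_step A = iter n red_step A.
Proof. by move=> le h; rewrite -(subnK le) iterD iter_red_step_fixed. Qed.

Lemma red_step_iter_card n A : #|A| <= n -> red_step (iter n red_step A) = iter n red_step A.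
Proof.
elim: n A => [|n IH] A hA.
  move: hA; rewrite leqn0 => /eqP/cards0_eq ->.
  by apply/eqP; rewrite eqEsubset red_step_sub sub0set.
case: (red_step A =P A) => [h|ne]; first by rewrite iter_red_step_fixed.
rewrite iterSr; apply: IH; rewrite -ltnS (leq_trans _ hA) // proper_card //.
by rewrite properEneq red_step_sub andbT; apply/eqP.
Qed.

Lemma reduction_exists A : exists R, is_reduction e A R.
Proof.
exists (iter #|A| red_step A); apply/is_reductionP; exists #|A|.
by split=> //; apply: red_step_iter_card.
Qed.

Lemma reduction_unique A R1 R2 : is_reduction e A R1 -> is_reduction e A R2 -> R1 = R2.
Proof.
move=> /is_reductionP[n [-> h1]] /is_reductionP[m [-> h2]].
by case: (leqP n m) => [|/ltnW] le; rewrite (iter_red_step_stable le).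
Qed.

Definition same_reduction A B := forall R1 R2,
  is_reduction e A R1 -> is_reduction e B R2 -> iso_on e R1 R2.

Lemma same_reduction_iso A B : iso_on e A B -> same_reduction A B.
Proof.
move=> iso R1 R2 /is_reductionP[n [E1 h1]] /is_reductionP[m [E2 h2]].
have := iso_on_iter_red_step (maxn n m) iso.
by rewrite (iter_red_step_stable (leq_maxl n m)) -?E1 // (iter_red_step_stable (leq_maxr n m)) -?E2.
Qed.

Lemma same_reduction_sym A B : same_reduction A B -> same_reduction B A.
Proof. by move=> h R1 R2 h1 h2; apply/iso_on_sym/h. Qed.

Lemma same_reduction_trans A B C :
  same_reduction A B -> same_reduction B C -> same_reduction A C.
Proof.
move=> hAB hBC R1 R3 h1 h3; have [R2 h2] := reduction_exists B.
exact: iso_on_trans (hAB _ _ h1 h2) (hBC _ _ h2 h3).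
Qed.

Lemma same_reduction_red_step A : same_reduction A (red_step A).
Proof.
move=> R1 R2 h1 h2; suff -> : R1 = R2 by apply: iso_on_refl.
apply: reduction_unique h2; move: h1 => /is_reductionP[n [E h]].
by apply/is_reductionP; exists n; rewrite -iterSr /= -E h.
Qed.

Definition no_adjacent_leaves A := forall v w, leaf e A v -> leaf e A w -> ~~ e v w.

(* Two adjacent leaves of rho X would be twins in rho X, hence in X. *)
Lemma rho_no_adjacent_leaves X : no_adjacent_leaves (rho e X).
Proof.
move=> v w lv lw; apply/negP => evw.
have [vR wR] : (v \in rho e X) /\ (w \in rho e X) by case/andP: lv; case/andP: lw.
have Nv : nbr e (rho e X) v = [set w] by apply: leaf_nbr lv _; rewrite in_nbr wR evw.
have Nw : nbr e (rho e X) w = [set v] by apply: leaf_nbr lw _; rewrite in_nbr vR esym evw.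
have t : twin (rho e X) v w by rewrite /twin vR wR /cnbr Nv Nw setUC eqxx.
have tX := twin_cover_twin (rho_twin_cover X) vR wR t.
by move: evw; rewrite (rho_twin_uniq vR wR tX) eirr.
Qed.

Definition pendant B s :=
  (s \in B) && [exists w, (nbr e B s == [set w]) && ~~ leaf e B w].

Lemma pendant_twin B s u : pendant B s -> twin B s u -> u = s.
Proof.
case/andP=> sB /existsP[w /andP[/eqP Nw nlw]] tsu.
have : w \in nbr e B s by rewrite Nw set11.
rewrite in_nbr => /andP[wB esw].
have sw : s != w by apply: contraTneq esw => ->; rewrite eirr.
have : u \in cnbr e B s by rewrite (twin_cnbr tsu) cnbr_id.
rewrite /cnbr Nw !inE => /orP[/eqP//|/eqP uw].
case/negP: nlw; rewrite /leaf wB nbr_cnbr -uw -(twin_cnbr tsu) /cnbr Nw uw.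
apply/cards1P; exists s; apply/setP => z; rewrite !inE.
by case: (z =P w) => [->|_] /=; rewrite ?orbF // eq_sym (negbTE sw).
Qed.

Lemma pendant_leaf_rho B s : pendant B s -> leaf e (rho e B) s.
Proof.
move=> ps; have /andP[sB /existsP[w /andP[/eqP Nw nlw]]] := ps.
have : w \in nbr e B s by rewrite Nw set11.
rewrite in_nbr => /andP[wB esw].
have sR : s \in rho e B.
  rewrite inE sB /=; apply/existsP => [[u /andP[]]].
  rewrite siblingsE => /andP[tus us] _.
  by rewrite (pendant_twin ps (twin_sym tus)) eqxx in us.
have wR : w \in rho e B.
  rewrite inE wB /=; apply/existsP => [[u /andP[]]].
  rewrite siblingsE => /andP[tuw uw] _.
  have [uB _] := twin_in tuw.
  have : s \in cnbr e B w by rewrite in_cnbr sB esym esw orbT.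
  rewrite -(twin_cnbr tuw) cnbr_sym // /cnbr Nw !inE => /orP[/eqP us|/eqP uw'].
    by move: tuw; rewrite us => /(pendant_twin ps) ws; rewrite ws eirr in esw.
  by rewrite uw' eqxx in uw.
rewrite /leaf sR (nbr_subset _ (rho_sub B)) Nw.
by rewrite (setIidPl _) ?cards1 // sub1set.
Qed.

Lemma rho_setD_twin_cover B S :
  {in S, forall s, pendant B s} -> twin_cover (rho e B :\: S) (B :\: S).
Proof.
move=> pS; split; first by apply: setSD; apply: rho_sub.
move=> z; rewrite inE => /andP[zS zB].
have [y yR tzy] := rho_twin_rep zB.
have yS : y \notin S.
  by apply: contra zS => yS; rewrite (pendant_twin (pS y yS) (twin_sym tzy)).
by exists y; [rewrite inE yS yR | apply: twin_setD].
Qed.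

Lemma pendant_subset_leaves_rho B S :
  {in S, forall s, pendant B s} -> S \subset leaves e (rho e B).
Proof. by move=> pS; apply/subsetP => s /pS/pendant_leaf_rho; rewrite inE. Qed.

Section LeafDeletion.
Variables (A S : {set T}).
Hypotheses (Aadj : no_adjacent_leaves A) (SA : S \subset leaves e A).

Lemma leaf_nbr_setD v : v \in leaves e A :\: S ->
  exists w, [/\ nbr e (A :\: S) v = [set w], w \in A :\: S & ~~ leaf e A w].
Proof.
rewrite !inE => /andP[vS lv]; have /andP[vA /cards1P[w Nw]] := lv.
have : w \in nbr e A v by rewrite Nw set11.
rewrite in_nbr => /andP[wA evw].
have nlw : ~~ leaf e A w by apply: contraL evw => lw; apply: Aadj.
have wS : w \notin S by apply: contra nlw => /(subsetP SA); rewrite inE.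
have wB : w \in A :\: S by rewrite inE wS wA.
exists w; split=> //.
by rewrite (nbr_subset _ (subsetDl A S)) Nw (setIidPl _) // sub1set.
Qed.

Local Notation P := [set v in leaves e A :\: S | pendant (A :\: S) v].

(* A leaf z of A outside S and P hangs on a vertex w that has become a leaf of
   A minus S; after removing P as well, z and w are twins. *)
Lemma lambda_twin_cover : twin_cover (lambda e A) (A :\: S :\: P).
Proof.
split.
  apply/subsetP => x; rewrite !inE => /andP[nlx xA].
  have xS : x \notin S by apply: contra nlx => /(subsetP SA); rewrite inE.
  by rewrite xS xA (negbTE nlx) andbF.
move=> z zX; have /setDP[zB zP] := zX; have /setDP[zA zS] := zB.
case lz: (z \in leaves e A); last by exists z; rewrite ?twin_refl // in_setD lz.
have zL : z \in leaves e A :\: S by rewrite inE zS lz.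
have [w [Nz wB nlw]] := leaf_nbr_setD zL.
have lw : leaf e (A :\: S) w.
  move: zP; rewrite inE zL /pendant zB negb_exists => /forallP/(_ w).
  by rewrite Nz eqxx negbK.
have Nw : nbr e (A :\: S) w = [set z].
  by apply: leaf_nbr lw _; move: (set11 w); rewrite -Nz !in_nbr zB esym => /andP[].
have wX : w \in A :\: S :\: P.
  by rewrite in_setD wB andbT inE in_setD [w \in leaves e A]inE (negbTE nlw) andbF.
exists w; first by rewrite in_setD [_ \in leaves _ _]inE nlw; case/setDP: wB.
rewrite /twin zX wX !(cnbr_subset (subsetDl _ P)) //.
by rewrite /cnbr Nz Nw setUC eqxx.
Qed.

End LeafDeletion.

Lemma rho_setD_leaves_same_reduction n A S : #|A| < n ->
  no_adjacent_leaves A -> S \subset leaves e A -> same_reduction A (rho e (A :\: S)).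
Proof.
elim: n A S => [//|n IH] A S An Aadj SA.
set B := rho e (A :\: S).
have [-> | BA] := eqVneq B A; first exact/same_reduction_iso/iso_on_refl.
have Bn : #|B| < n.
  have BpA : B \proper A.
    by rewrite properEneq BA (subset_trans (rho_sub _) (subsetDl A S)).
  by apply: leq_trans (proper_card BpA) _; rewrite -ltnS.
set P := [set v in leaves e A :\: S | pendant (A :\: S) v].
have pP : {in P, forall s, pendant (A :\: S) s} by move=> s; rewrite inE => /andP[].
have step : iso_on e (red_step A) (rho e (B :\: P)).
  apply: iso_on_trans (twin_cover_iso (lambda_twin_cover Aadj SA)) _.
  exact/iso_on_sym/twin_cover_iso/rho_setD_twin_cover.
have IHB := IH B P Bn (@rho_no_adjacent_leaves _) (pendant_subset_leaves_rho pP).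
exact: same_reduction_trans (@same_reduction_red_step A)
  (same_reduction_trans (same_reduction_iso step) (same_reduction_sym IHB)).
Qed.

Lemma connected_no_adjacent_leaves :
  connected_graph e -> ~ is_K2 e -> no_adjacent_leaves [set: T].
Proof.
move=> conn nK2 v w lv lw; apply/negP => evw; apply: nK2.
have vw : v != w by apply: contraTneq evw => ->; rewrite eirr.
have Nv : nbr e [set: T] v = [set w] by apply: leaf_nbr lv _; rewrite in_nbr in_setT.
have Nw : nbr e [set: T] w = [set v].
  by apply: leaf_nbr lw _; rewrite in_nbr in_setT esym.
have closed_vw : closed e [set v; w].
  apply: intro_closed; first exact: sym_connect_sym.
  move=> x y exy; rewrite !inE => /orP[] /eqP xE; subst x.
    have : y \in nbr e [set: T] v by rewrite in_nbr in_setT.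
    by rewrite Nv inE => ->; rewrite orbT.
  have : y \in nbr e [set: T] w by rewrite in_nbr in_setT.
  by rewrite Nw inE => ->.
have all_vw u : u \in [set v; w].
  by rewrite -(closed_connect closed_vw (conn v u)) set21.
split.
  rewrite -cardsT; have -> : [set: T] = [set v; w] by apply/setP => u; rewrite in_setT all_vw.
  by rewrite cards2 vw.
move=> x y; move: (all_vw x) (all_vw y); rewrite !inE.
by case/orP=> /eqP-> /orP[] /eqP->; rewrite ?eqxx // => _; rewrite esym.
Qed.

End Reduction.

Theorem corollary5p3 (T : finType) (e : rel T) (U : {set T}) :
  simple_graph e -> connected_graph e -> ~ is_K2 e ->
  U \subset leaves e [set: T] ->
  (exists R1, is_reduction e [set: T] R1) /\
  (exists R2, is_reduction e (rho e (lambdaS [set: T] U)) R2) /\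
  (forall R1 R2, is_reduction e [set: T] R1 ->
     is_reduction e (rho e (lambdaS [set: T] U)) R2 -> iso_on e R1 R2).
Proof.
move=> [esym eirr] conn nK2 UT.
split; first exact: reduction_exists.
split; first exact: reduction_exists.
have Tadj := connected_no_adjacent_leaves esym eirr conn nK2.
exact: (rho_setD_leaves_same_reduction esym eirr (ltnSn _) Tadj UT).
Qed.
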